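(* Let $L$ be a bounded distributive lattice and $m\colon 2^{[n]}\to L$ an $L$-valued capacity. Then the Sugeno integral $\mathsf{Su}_m$ is inf-homogeneous and g-comonotone supremal, and it is also sup-homogeneous and g-comonotone infimal.
   Context: $[n]=\{1,\dots,n\}$; $0,1$ are bottom and top of $L$. An $L$-valued capacity is $m\colon 2^{[n]}\to L$, monotone w.r.t. inclusion, with $m(\emptyset)=0$, $m([n])=1$. $\mathsf{Su}_m(\mathbf x)=\bigvee_{I\subseteq[n]}\big(m(I)\wedge\bigwedge_{i\in I}x_i\big)=\bigwedge_{I\subseteq[n]}\big(m([n]\setminus I)\vee\bigvee_{i\in I}x_i\big)$ (empty meet $=1$, empty join $=0$). For $c\in L$, $\mathbf c=(c,\dots,c)$; operations on vectors are componentwise. $f\colon L^n\to L$ is inf-homogeneous if $f(\mathbf c\wedge\mathbf x)=c\wedge f(\mathbf x)$ and sup-homogeneous if $f(\mathbf c\vee\mathbf x)=c\vee f(\mathbf x)$, for all $\mathbf x\in L^n$, $c\in L$. $\mathbf x,\mathbf y$ are g-comonotone if for all $i,j$: $(x_i\vee y_i)\wedge(x_j\vee y_j)=(x_i\wedge x_j)\vee(y_i\wedge y_j)$. $f$ is g-comonotone supremal (resp. infimal) if $f(\mathbf x\vee\mathbf y)=f(\mathbf x)\vee f(\mathbf y)$ (resp. $f(\mathbf x\wedge\mathbf y)=f(\mathbf x)\wedge f(\mathbf y)$) for all g-comonotone $\mathbf x,\mathbf y$. *)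

From mathcomp Require Import all_boot all_order.
Set Implicit Arguments. Unset Strict Implicit. Unset Printing Implicit Defensive.
Import Order.TTheory.
Local Open Scope order_scope.

Section Sugeno.
Context {disp : Order.disp_t} {L : tbDistrLatticeType disp} {n : nat}.

Definition capacity (m : {set 'I_n} -> L) : Prop :=
  (forall A B : {set 'I_n}, A \subset B -> m A <= m B) /\
  m set0 = \bot /\ m setT = \top.

Definition sugeno (m : {set 'I_n} -> L) (x : 'I_n -> L) : L :=
  \join_(I : {set 'I_n}) (m I `&` \meet_(i in I) x i).

Definition cvec (c : L) : 'I_n -> L := fun _ => c.
Definition vmeet (x y : 'I_n -> L) : 'I_n -> L := fun i => x i `&` y i.
Definition vjoin (x y : 'I_n -> L) : 'I_n -> L := fun i => x i `|` y i.

Definition inf_homogeneous (f : ('I_n -> L) -> L) : Prop :=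
  forall (x : 'I_n -> L) (c : L), f (vmeet (cvec c) x) = c `&` f x.
Definition sup_homogeneous (f : ('I_n -> L) -> L) : Prop :=
  forall (x : 'I_n -> L) (c : L), f (vjoin (cvec c) x) = c `|` f x.

Definition g_comonotone (x y : 'I_n -> L) : Prop :=
  forall i j : 'I_n,
    (x i `|` y i) `&` (x j `|` y j) = (x i `&` x j) `|` (y i `&` y j).

Definition g_comonotone_supremal (f : ('I_n -> L) -> L) : Prop :=
  forall x y : 'I_n -> L, g_comonotone x y -> f (vjoin x y) = f x `|` f y.
Definition g_comonotone_infimal (f : ('I_n -> L) -> L) : Prop :=
  forall x y : 'I_n -> L, g_comonotone x y -> f (vmeet x y) = f x `&` f y.

End Sugeno.

(** In a distributive lattice, g-comonotonicity of [x] and [y] amounts to the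
    cross inequalities [x i `&` y j <= x j `|` y i].  Inducting over [I], they
    give [\meet_(i in I) (x i `|` y i) <= \meet_(i in I) x i `|` \meet_(i in I) y i],
    whence supremality.  For infimality, they bound each term
    [m I `&` XI `&` m J `&` YJ] of [Su x `&` Su y] by [XJ `|` YI]; since
    [t <= a `|` b] forces [t = (t `&` a) `|` (t `&` b)], the term splits into a
    piece below [m J `&` XJ `&` YJ] and one below [m I `&` XI `&` YI], both
    terms of [Su (x `&` y)].  Homogeneity is distributivity of [`&`] over joins
    and of [`|`] over meets, the empty and full sets absorbing the constant. *)

From mathcomp Require Import all_boot all_order.
Set Implicit Arguments. Unset Strict Implicit. Unset Printing Implicit Defensive.
Import Order.TTheory.
Local Open Scope order_scope.

Lemma meetx_joins d (L : bDistrLatticeType d) (T : Type) (r : seq T) (P : pred T)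
    (F : T -> L) (a : L) :
  a `&` \join_(i <- r | P i) F i = \join_(i <- r | P i) (a `&` F i).
Proof. by elim/big_rec2: _ => [|i y1 y2 _ <-]; [exact: meetx0 | exact: meetUr]. Qed.

Lemma joinx_meets d (L : tDistrLatticeType d) (T : Type) (r : seq T) (P : pred T)
    (F : T -> L) (a : L) :
  a `|` \meet_(i <- r | P i) F i = \meet_(i <- r | P i) (a `|` F i).
Proof. exact: (@meetx_joins _ L^d). Qed.

Section DistrLattice.
Context {d : Order.disp_t} {L : distrLatticeType d}.
Implicit Types (a b t : L).

Lemma meet_splitU t a b : t <= a `|` b -> (t `&` a) `|` (t `&` b) = t.
Proof. by move=> /meet_idPl tab; rewrite -meetUr tab. Qed.

Lemma meetUU_le_cross a b a' b' :
  a `&` b' <= a' `|` b -> a' `&` b <= a `|` b' ->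
  (a `|` b) `&` (a' `|` b') <= (a `&` a') `|` (b `&` b').
Proof.
move=> ab' a'b; rewrite meetUl !meetUr !leUx leUl leUr !andbT.
apply/andP; split.
- rewrite -(meet_splitU ab') leU2 //; first by rewrite meetAC leIl.
  by rewrite meetAC leI2 ?leIr.
- rewrite (meetC b) -(meet_splitU a'b) leU2 //; last by rewrite leI2 ?leIr.
  by rewrite meetAC (meetC a') leIl.
Qed.

End DistrLattice.

Section TDistrLattice.
Context {d : Order.disp_t} {L : tDistrLatticeType d}.

Lemma meets_cross_le (I : finType) (P Q : pred I) (F G : I -> L) :
  (forall i j, P i -> Q j -> F i `&` G j <= F j `|` G i) ->
  \meet_(i | P i) F i `&` \meet_(j | Q j) G j <=
  \meet_(j | Q j) F j `|` \meet_(i | P i) G i.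
Proof.
move=> cross; rewrite joinx_meets; apply/meetsP => i Pi.
rewrite joinC joinx_meets; apply/meetsP => j Qj.
apply: le_trans (leI2 (meets_inf _ Pi) (meets_inf _ Qj)) _.
by rewrite joinC; exact: cross.
Qed.

Lemma meets_joinU_le (T : Type) (r : seq T) (P : pred T) (F G : T -> L) :
  (forall i j, P i -> P j -> F i `&` G j <= F j `|` G i) ->
  \meet_(i <- r | P i) (F i `|` G i) <=
  \meet_(i <- r | P i) F i `|` \meet_(i <- r | P i) G i.
Proof.
move=> cross.
(* The induction carries the cross inequalities between the family and the
   partial meets [X], [Y] along as an invariant. *)
pose crossing a b := forall k, P k -> F k `&` b <= G k `|` a /\ G k `&` a <= F k `|` b.
suff [] : \meet_(i <- r | P i) (F i `|` G i) <=
    \meet_(i <- r | P i) F i `|` \meet_(i <- r | P i) G i /\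
  crossing (\meet_(i <- r | P i) F i) (\meet_(i <- r | P i) G i) by [].
elim/big_rec3: _ => [|i z X Y Pi [zXY cXY]].
  by split=> [|k _]; rewrite !joinx1 ?lex1.
split.
- apply: le_trans (leI2 (lexx _) zXY) _.
  have [FY GX] := cXY i Pi.
  by apply: meetUU_le_cross; [rewrite joinC | rewrite meetC].
- move=> k Pk; have [FY GX] := cXY k Pk.
  have Fki := cross k i Pk Pi; have Fik := cross i k Pi Pk.
  rewrite !joinIr !lexI; split; apply/andP; split.
  + by rewrite joinC; apply: le_trans Fki; rewrite leI2 ?leIl.
  + by apply: le_trans FY; rewrite leI2 ?leIr.
  + by apply: le_trans Fik; rewrite meetC leI2 ?leIl.
  + by apply: le_trans GX; rewrite leI2 ?leIr.
Qed.

End TDistrLattice.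

Lemma g_comonotone_cross d (L : tbDistrLatticeType d) (n : nat) (x y : 'I_n -> L) :
  g_comonotone x y -> forall i j, x i `&` y j <= x j `|` y i.
Proof.
move=> xy i j; apply: (@le_trans _ _ ((x i `|` y i) `&` (x j `|` y j))).
  by rewrite leI2 ?leUl ?leUr.
by rewrite xy leU2 ?leIl ?leIr.
Qed.

Section Sugeno.
Context {d : Order.disp_t} {L : tbDistrLatticeType d} {n : nat}.
Variable m : {set 'I_n} -> L.
Implicit Types (x y : 'I_n -> L) (c : L).

Lemma le_sugeno x y : (forall i, x i <= y i) -> sugeno m x <= sugeno m y.
Proof.
move=> xy; apply/joinsP => I _; apply: (joins_min (j := I)) => //.
by rewrite leI2 //; apply/meetsP => i Ii; exact: meets_max Ii (xy i).
Qed.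

Lemma sugeno_inf_homogeneous : m set0 = \bot -> inf_homogeneous (sugeno m).
Proof.
move=> m0 x c; apply/le_anti/andP; split.
  rewrite lexI (le_sugeno (fun i => leIr _ _)) andbT; apply/joinsP => I _.
  have [->|[j Ij]] := set_0Vmem I; first by rewrite m0 meet0x le0x.
  by apply: le_trans (leIr _ _) _; exact: meets_max Ij (leIl _ _).
rewrite meetx_joins; apply/joinsP => I _; apply: (joins_min (j := I)) => //.
rewrite meetCA leI2 //; apply/meetsP => i Ii.
by rewrite leI2 //; exact: meets_inf.
Qed.

Lemma sugeno_sup_homogeneous : m setT = \top -> sup_homogeneous (sugeno m).
Proof.
move=> m1 x c.
have meets_cU I : \meet_(i in I) vjoin (cvec c) x i = c `|` \meet_(i in I) x i.
  by rewrite joinx_meets.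
apply/le_anti/andP; split.
  apply/joinsP => I _; rewrite meets_cU meetUr leU2 ?leIr //.
  exact: (joins_sup (j := I)).
rewrite leUx (le_sugeno (fun i => leUr _ _)) andbT.
by apply: (joins_min (j := setT)) => //; rewrite meets_cU m1 meet1x leUl.
Qed.

Lemma sugeno_g_comonotone_supremal : g_comonotone_supremal (sugeno m).
Proof.
move=> x y xy; apply/le_anti/andP; split; last first.
  by rewrite leUx !le_sugeno // => i; rewrite ?leUl ?leUr.
apply/joinsP => I _.
have cross i j (_ : i \in I) (_ : j \in I) := g_comonotone_cross xy i j.
apply: le_trans (leI2 (lexx (m I)) (meets_joinU_le _ cross)) _.
by rewrite meetUr leU2 //; exact: (joins_sup (j := I)).
Qed.

Lemma sugeno_g_comonotone_infimal : g_comonotone_infimal (sugeno m).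
Proof.
move=> x y xy; apply/le_anti/andP; split.
  by rewrite lexI !le_sugeno // => i; rewrite ?leIl ?leIr.
rewrite meetx_joins; apply/joinsP => J _; rewrite meetC meetx_joins.
apply/joinsP => I _.
set XI := \meet_(i in I) x i; set YI := \meet_(i in I) y i.
set XJ := \meet_(j in J) x j; set YJ := \meet_(j in J) y j.
set t := (m J `&` YJ) `&` (m I `&` XI).
have t_le : t <= XJ `|` YI.
  have cross i j (_ : i \in I) (_ : j \in J) := g_comonotone_cross xy i j.
  by apply: le_trans (meets_cross_le cross); rewrite meetC leI2 ?leIr.
rewrite -(meet_splitU t_le) leUx; apply/andP; split.
- apply: (joins_min (j := J)) => //; rewrite /vmeet big_split /=.
  by apply: le_trans (leI2 (leIl _ _) (lexx XJ)) _; rewrite -meetA (meetC YJ).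
- apply: (joins_min (j := I)) => //; rewrite /vmeet big_split /=.
  by apply: le_trans (leI2 (leIr _ _) (lexx YI)) _; rewrite -meetA.
Qed.

End Sugeno.

Theorem lemma3 (disp : Order.disp_t) (L : tbDistrLatticeType disp) (n : nat)
    (m : {set 'I_n} -> L) :
  capacity m ->
  (inf_homogeneous (sugeno m) /\ g_comonotone_supremal (sugeno m)) /\
  (sup_homogeneous (sugeno m) /\ g_comonotone_infimal (sugeno m)).
Proof.
move=> [_ [m0 m1]]; split; split.
- exact: sugeno_inf_homogeneous.
- exact: sugeno_g_comonotone_supremal.
- exact: sugeno_sup_homogeneous.
- exact: sugeno_g_comonotone_infimal.
Qed.
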